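(* Consider the two-armed improving bandit instance on the horizon $[0,T]$ with arms $f_1(t)=1$ for all $t$, and $f_2(t)=0$ for $t<\theta$, $f_2(t)=\alpha(t-\theta)$ for $t\ge\theta$, where $\theta$ is unknown. Suppose an agent is $\tilde\alpha$-gritty, i.e. guesses that the slope of the increasing portion of $f_2$ is $\tilde\alpha>0$, and that the agent's goal is to maximize the competitive ratio. Then the agent plays $f_2$ for $T-\sqrt{2T/\tilde\alpha}$ units of time, after which it switches to $f_1$ permanently.
   Context: Time is continuous. The argument $t$ of each arm's reward function is the amount of time that arm has been played so far. The reward from an arm is the integral of its reward function over the time spent on it. A strategy achieves competitive ratio $g$ if $\mathrm{ALG}/\mathrm{OPT}\ge g$, where $\mathrm{ALG}$ is the strategy's total reward and $\mathrm{OPT}$ is the optimal achievable total reward in hindsight. The agent considers only strategies that play $f_2$ for some time $s$ and then switch permanently to $f_1$. It chooses the switch point $s$ to maximize its worst-case competitive ratio, computed with its guessed slope $\tilde\alpha$. This worst case is over the unknown $\theta$. There are two extreme cases. If $f_2$ never increases, the ratio is $\frac{T-s}{T}$, which decreases in $s$. If $f_2$ begins increasing right after the switch, the ratio is $\frac{T-s}{\frac{\tilde\alpha}{2}(T-s)^2}$, which increases in $s$. The competitive-ratio-maximizing agent chooses the $s$ at which these two quantities are equal. *)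

From Stdlib Require Import Reals Lra.
Open Scope R_scope.

(* Strategy: play f2 for time s, then f1 permanently (0 <= s < T).
   Competitive ratio in the extreme case where f2 never increases:
   ALG = T - s, OPT = T. *)
Definition ratio_flat (T s : R) : R := (T - s) / T.

(* Competitive ratio in the extreme case where f2 starts increasing (with
   the guessed slope atil (= tilde alpha)) right after the switch: ALG = T - s,
   OPT = (atil/2) (T - s)^2. *)
Definition ratio_incr (atil T s : R) : R := (T - s) / ((atil / 2) * (T - s) ^ 2).

(* Worst-case competitive ratio over the unknown theta, computed with the
   guessed slope atil (= tilde alpha): the minimum over the two extreme cases. *)
Definition worst_ratio (atil T s : R) : R := Rmin (ratio_flat T s) (ratio_incr atil T s).

Definition agent_choice (atil T s : R) : Prop :=
  0 <= s < T /\
  forall s', 0 <= s' < T -> worst_ratio atil T s' <= worst_ratio atil T s.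

(* The worst-case ratio of switching at s, as a function of the remaining
   time u = T - s, is the minimum of the increasing function u / T and the
   decreasing function 2 / (atil u).  Such a minimum is maximized exactly
   where the two functions cross, here at u = sqrt (2 T / atil); the
   hypothesis 2 / atil <= T makes this crossing lie in (0, T]. *)

From Stdlib Require Import Reals Lra.
Open Scope R_scope.

Section MinOfMonotone.

Variables (D : R -> Prop) (f g : R -> R) (c : R).
Hypothesis f_incr : forall u v, D u -> D v -> u < v -> f u < f v.
Hypothesis g_decr : forall u v, D u -> D v -> u < v -> g v < g u.
Hypothesis Dc : D c.
Hypothesis fg_cross : f c = g c.

Lemma Rmin_lt_crossing (u : R) : D u -> u <> c -> Rmin (f u) (g u) < f c.
Proof.
  intros Du Huc.
  destruct (Rtotal_order u c) as [Hlt | [Heq | Hgt]].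
  - pose proof (Rmin_l (f u) (g u)). pose proof (f_incr u c Du Dc Hlt). lra.
  - contradiction.
  - pose proof (Rmin_r (f u) (g u)). pose proof (g_decr c u Dc Du Hgt). lra.
Qed.

End MinOfMonotone.

Section Ratios.

Variables atil T : R.
Hypothesis atil_gt0 : 0 < atil.
Hypothesis T_ge : 2 / atil <= T.

Lemma T_gt0 : 0 < T.
Proof. pose proof (Rdiv_lt_0_compat 2 atil ltac:(lra) atil_gt0). lra. Qed.

Let c := sqrt (2 * T / atil).

Lemma crossing_gt0 : 0 < c.
Proof. apply sqrt_lt_R0, Rdiv_lt_0_compat; pose proof T_gt0; lra. Qed.

Lemma crossing_le_T : c <= T.
Proof.
  rewrite <- (sqrt_square T) by (left; exact T_gt0).
  unfold c. apply sqrt_le_1_alt.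
  replace (2 * T / atil) with (2 / atil * T) by (field; lra).
  apply Rmult_le_compat_r; [left; exact T_gt0 | exact T_ge].
Qed.

Lemma ratios_cross : c / T = 2 / (atil * c).
Proof.
  pose proof T_gt0. pose proof crossing_gt0.
  assert (Hcc : c * c * atil = 2 * T).
  { unfold c. rewrite sqrt_sqrt; [field; lra |].
    left. apply Rdiv_lt_0_compat; lra. }
  replace 2 with (c * c * atil / T) by (rewrite Hcc; field; lra).
  field. repeat split; lra.
Qed.

Lemma worst_ratio_remaining (s : R) : s < T ->
  worst_ratio atil T s = Rmin ((T - s) / T) (2 / (atil * (T - s))).
Proof.
  intros Hs. unfold worst_ratio, ratio_flat, ratio_incr.
  replace ((T - s) / (atil / 2 * (T - s) ^ 2)) with (2 / (atil * (T - s)))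
    by (field; split; lra).
  reflexivity.
Qed.

Lemma worst_ratio_crossing : worst_ratio atil T (T - c) = c / T.
Proof.
  pose proof crossing_gt0.
  rewrite worst_ratio_remaining by lra.
  replace (T - (T - c)) with c by ring.
  rewrite <- ratios_cross. apply Rmin_left. lra.
Qed.

Lemma flat_ratio_incr (u v : R) : u < v -> u / T < v / T.
Proof.
  intros Huv. pose proof T_gt0.
  unfold Rdiv. apply Rmult_lt_compat_r; [apply Rinv_0_lt_compat |]; lra.
Qed.

Lemma incr_ratio_decr (u v : R) : 0 < u -> u < v -> 2 / (atil * v) < 2 / (atil * u).
Proof.
  intros Hu Huv. unfold Rdiv.
  apply Rmult_lt_compat_l; [lra |].
  apply Rinv_lt_contravar.
  - apply Rmult_lt_0_compat; apply Rmult_lt_0_compat; lra.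
  - apply Rmult_lt_compat_l; lra.
Qed.

Lemma worst_ratio_lt_crossing (s : R) : s < T -> s <> T - c ->
  worst_ratio atil T s < c / T.
Proof.
  intros Hs Hsc. rewrite worst_ratio_remaining by exact Hs.
  apply (Rmin_lt_crossing (fun u => 0 < u) (fun u => u / T) (fun u => 2 / (atil * u)) c
           (fun u v _ _ => flat_ratio_incr u v) (fun u v Hu _ => incr_ratio_decr u v Hu)
           crossing_gt0 ratios_cross); lra.
Qed.

Lemma worst_ratio_le_crossing (s : R) : s < T -> worst_ratio atil T s <= c / T.
Proof.
  intros Hs. destruct (Req_dec s (T - c)) as [-> | Hsc].
  - rewrite worst_ratio_crossing. apply Rle_refl.
  - left. exact (worst_ratio_lt_crossing s Hs Hsc).
Qed.

Lemma ratio_flat_eq_incr_crossing : ratio_flat T (T - c) = ratio_incr atil T (T - c).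
Proof.
  pose proof crossing_gt0.
  unfold ratio_flat, ratio_incr. replace (T - (T - c)) with c by ring.
  replace (c / (atil / 2 * c ^ 2)) with (2 / (atil * c)) by (field; split; lra).
  exact ratios_cross.
Qed.

End Ratios.

Theorem lemma2 (atil T : R) (Hat : 0 < atil) (HT : 2 / atil <= T) :
  (forall s : R, agent_choice atil T s <-> s = T - sqrt (2 * T / atil)) /\
  ratio_flat T (T - sqrt (2 * T / atil)) = ratio_incr atil T (T - sqrt (2 * T / atil)).
Proof.
  pose proof (crossing_gt0 atil T Hat HT) as Hc.
  pose proof (crossing_le_T atil T Hat HT) as HcT.
  pose proof (worst_ratio_crossing atil T Hat HT) as Hopt.
  set (c := sqrt (2 * T / atil)) in *.
  split.
  - intros s. split.
    + intros [Hs Hmax].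
      specialize (Hmax (T - c) ltac:(lra)). rewrite Hopt in Hmax.
      destruct (Req_dec s (T - c)) as [E | E]; [exact E |].
      exfalso. apply (Rlt_not_le _ _ (worst_ratio_lt_crossing atil T Hat HT s ltac:(lra) E)).
      exact Hmax.
    + intros ->. split; [lra |].
      intros s' Hs'. rewrite Hopt.
      apply (worst_ratio_le_crossing atil T Hat HT). lra.
  - exact (ratio_flat_eq_incr_crossing atil T Hat HT).
Qed.
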